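(* Let $q>0$, let $I=(i_1,\dots,i_k)$ be an increasing sequence of integers contained in $\{1,\dots,n\}$ and let $\pi\sim\mu_{n,q}$. Then for any integer $1\le b\le n-i_k$, $\pi_I$ and $\pi_{I+b}$ have the same distribution, i.e. $\mathbb{P}(\pi_I=\omega)=\mathbb{P}(\pi_{I+b}=\omega)$ for every $\omega\in S_k$.
   Context: For $q>0$ and $n\ge1$, $\mu_{n,q}(\pi)=q^{\mathrm{inv}(\pi)}/Z_{n,q}$ on $S_n$, with $\mathrm{inv}(\pi)$ the number of pairs $i<j$ with $\pi(i)>\pi(j)$ and $Z_{n,q}$ a normalizing constant. For an increasing sequence $I=(i_1,\dots,i_k)$, $I+b=(i_1+b,\dots,i_k+b)$, and $\pi_I\in S_k$ denotes the induced relative ordering: $\pi_I(j)>\pi_I(j')$ if and only if $\pi(i_j)>\pi(i_{j'})$. *)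

From HB Require Import structures.
From mathcomp Require Import all_boot all_order all_algebra all_fingroup.
Set Implicit Arguments. Unset Strict Implicit. Unset Printing Implicit Defensive.
Import Order.TTheory GRing.Theory Num.Theory.

(* Permutations of {1..n} are represented by 'S_n (0-based: position i <-> 'I_n element i-1). *)

Definition inv {n : nat} (pi : 'S_n) : nat :=
  #|[set p : 'I_n * 'I_n | (p.1 < p.2)%N && (pi p.2 < pi p.1)%N]|.

Local Open Scope ring_scope.

Definition Zmal {R : realFieldType} (n : nat) (q : R) : R :=
  \sum_(pi : 'S_n) q ^+ inv pi.

Definition mallows {R : realFieldType} (n : nat) (q : R) (pi : 'S_n) : R :=
  q ^+ inv pi / Zmal n q.

(* value pi(i) for a 1-based position i (0-based value; 0 if i out of range) *)
Definition pval {n : nat} (pi : 'S_n) (i : nat) : nat :=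
  if insub (i.-1) is Some x then val (pi x) else 0%N.

(* pi_I = omega, for I = (i_1,...,i_k) (1-based positions, given as a seq of size k):
   omega(j) > omega(j') iff pi(i_j) > pi(i_j'). *)
Definition pattern_is {n k : nat} (pi : 'S_n) (I : seq nat) (omega : 'S_k) : bool :=
  [forall j : 'I_k, forall j' : 'I_k,
     (omega j' < omega j)%N == (pval pi (nth 0%N I j') < pval pi (nth 0%N I j))%N].

Definition prob_pattern {R : realFieldType} (n k : nat) (q : R) (I : seq nat) (omega : 'S_k) : R :=
  \sum_(pi : 'S_n | pattern_is pi I omega) @mallows R n q pi.

From mathcomp Require Import all_boot all_order all_algebra all_fingroup zify.
Import Order.TTheory GRing.Theory Num.Theory.
Set Implicit Arguments. Unset Strict Implicit. Unset Printing Implicit Defensive.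

(* Shifting the window by one is the same as cyclically rotating the
   permutation: let [rotate p] move the last entry [p m] to the front with
   the new value [m - p m], and relabel the remaining values order-preservingly
   around it.  The pairs not involving the moved entry keep their relative
   order, and the moved entry loses the [m - p m] inversions it had with the
   larger values before it while gaining [m - p m] with the smaller values
   after it.  So [rotate] is a bijection of S_(m+1) preserving [inv], hence
   the Mallows measure, and it turns the pattern at positions I into the
   pattern at positions I + 1 as long as I avoids the last position. *)

Lemma ltn_bump2 h i j : (bump h i < bump h j) = (i < j).
Proof. by rewrite !ltnNge leq_bump2. Qed.

Lemma sorted_leq_last (s : seq nat) : sorted ltn s -> {in s, forall i, i <= last 0 s}.
Proof.
move=> s_lt i s_i; rewrite -(nth_index 0 s_i) -(nth_last 0).
have s_le : sorted leq s by apply: sub_sorted s_lt => x y /ltnW.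
have s_gt0 : 0 < size s by case: s s_i {s_lt s_le}.
apply: (sorted_leq_nth leq_trans leqnn); rewrite ?inE ?index_mem ?prednK //.
by rewrite -ltnS prednK // index_mem.
Qed.

Lemma sum_perm_lt n (p : 'S_n) a : \sum_(i : 'I_n) (p i < a) = minn a n.
Proof.
rewrite (reindex_inj (@perm_inj _ p^-1)) /=.
under eq_bigr do rewrite permKV.
elim: n {p} => [|n IH]; first by rewrite big_ord0 minn0.
by rewrite big_ord_recr /= IH; case: ltnP => /=; lia.
Qed.

Lemma sum_perm_gt n (p : 'S_n) a : \sum_(i : 'I_n) (a < p i) = n - a.+1.
Proof.
rewrite (reindex_inj (@perm_inj _ p^-1)) /=.
under eq_bigr do rewrite permKV.
elim: n {p} => [|n IH]; first by rewrite big_ord0.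
by rewrite big_ord_recr /= IH; case: ltnP => /=; lia.
Qed.

Definition inversions {n} (f : 'I_n -> nat) : nat :=
  \sum_(i < n) \sum_(j < n) ((i < j) && (f j < f i)).

Lemma inv_inversions n (p : 'S_n) : inv p = inversions (fun i => val (p i)).
Proof.
rewrite /inv /inversions -sum1_card pair_big /= big_mkcond; apply: eq_bigr => x _.
by rewrite inE; case: (_ && _).
Qed.

Lemma eq_inversions n (f g : 'I_n -> nat) :
  (forall i j, (f i < f j) = (g i < g j)) -> inversions f = inversions g.
Proof. by move=> fg; apply: eq_bigr => i _; apply: eq_bigr => j _; rewrite fg. Qed.

Lemma inversions_recl n (f : 'I_n.+1 -> nat) :
  inversions f = inversions (f \o lift ord0) + \sum_(j < n) (f (lift ord0 j) < f ord0).
Proof.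
rewrite /inversions big_ord_recl /= addnC; congr (_ + _).
  by apply: eq_bigr => i _; rewrite big_ord_recl.
by rewrite big_ord_recl.
Qed.

Lemma inversions_recr n (f : 'I_n.+1 -> nat) :
  inversions f = inversions (f \o widen_ord (leqnSn n))
                 + \sum_(i < n) (f ord_max < f (widen_ord (leqnSn n) i)).
Proof.
rewrite /inversions big_ord_recr /= [X in _ + X]big1 => [|j _]; last first.
  by rewrite ltnNge -ltnS ltn_ord.
rewrite addn0 -big_split /=; apply: eq_bigr => i _.
by rewrite big_ord_recr /= ltn_ord.
Qed.

Section Rotation.

Variable m : nat.
Implicit Types (p : 'S_m.+1) (u v : 'I_m.+1).

(* The values other than [v] keep their relative order, leaving a gap at
   [m - v] into which [v] itself is sent. *)
Definition rerank (v u : 'I_m.+1) : 'I_m.+1 :=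
  if unlift v u is Some w then lift (inord (m - v)) w else inord (m - v).

Lemma rerank_self v : rerank v v = inord (m - v).
Proof. by rewrite /rerank unlift_none. Qed.

Lemma ltn_rerank v u1 u2 : u1 != v -> u2 != v ->
  (rerank v u1 < rerank v u2) = (u1 < u2).
Proof.
rewrite /rerank; case: unliftP => [w1 ->|->]; last by rewrite eqxx.
case: unliftP => [w2 ->|->]; last by rewrite eqxx.
by rewrite !ltn_bump2.
Qed.

Lemma rerank_inj v : injective (rerank v).
Proof.
move=> u1 u2; rewrite /rerank.
case: unliftP => [w1 ->|->]; case: unliftP => [w2 ->|->] //.
- by move/lift_inj ->.
- by move=> /eqP; rewrite lift_eqF.
- by move=> /esym /eqP; rewrite lift_eqF.
Qed.

Definition rotate (p : 'S_m.+1) : 'S_m.+1 :=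
  perm (@ord_pred_inj m.+1) * p * perm (@rerank_inj (p ord_max)).

Lemma rotateE p y : rotate p y = rerank (p ord_max) (p (ord_pred y)).
Proof. by rewrite !permM !permE. Qed.

Lemma rotate0 p : rotate p ord0 = inord (m - p ord_max).
Proof.
rewrite rotateE; have -> : ord_pred ord0 = ord_max :> 'I_m.+1.
  by apply: val_inj; rewrite /= modn_small.
by rewrite rerank_self.
Qed.

Lemma rotate_lift p i :
  rotate p (lift ord0 i) = rerank (p ord_max) (p (widen_ord (leqnSn m) i)).
Proof.
rewrite rotateE; congr (rerank _ (p _)).
by apply: val_inj; rewrite /= add0n modnDr modn_small // leqW.
Qed.

Lemma ltn_rotate_lift p i j :
  (rotate p (lift ord0 i) < rotate p (lift ord0 j))
  = (p (widen_ord (leqnSn m) i) < p (widen_ord (leqnSn m) j)).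
Proof.
have neq_last k : p (widen_ord (leqnSn m) k) != p ord_max.
  by rewrite (inj_eq perm_inj) -val_eqE /= neq_ltn ltn_ord.
by rewrite !rotate_lift ltn_rerank.
Qed.

Lemma rotate_inj : injective rotate.
Proof.
move=> p1 p2 rot12.
have last12 : p1 ord_max = p2 ord_max.
  have /(congr1 val) := congr1 (fun s : 'S_m.+1 => s ord0) rot12.
  rewrite /= !rotate0 /= !inordK; try by rewrite ltnS leq_subr.
  move=> eq_sub; apply: ord_inj.
  by have := ltn_ord (p1 ord_max); have := ltn_ord (p2 ord_max); lia.
by move: rot12; rewrite /rotate last12 => /mulIg /mulgI.
Qed.

Lemma inv_rotate p : inv (rotate p) = inv p.
Proof.
rewrite !inv_inversions inversions_recl inversions_recr; congr (_ + _).
  by apply: eq_inversions => i j /=; rewrite ltn_rotate_lift.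
have first_term : \sum_(j < m) (rotate p (lift ord0 j) < rotate p ord0) = m - p ord_max.
  have := sum_perm_lt (rotate p) (rotate p ord0).
  rewrite big_ord_recl ltnn rotate0 /= inordK; last by rewrite ltnS leq_subr.
  by rewrite add0n => ->; apply/minn_idPl/leqW/leq_subr.
have last_term : \sum_(i < m) (p ord_max < p (widen_ord (leqnSn m) i)) = m - p ord_max.
  have := sum_perm_gt p (p ord_max).
  by rewrite big_ord_recr /= ltnn addn0 subSS.
by rewrite first_term last_term.
Qed.

End Rotation.

Lemma pvalE n (pi : 'S_n) (i : 'I_n) : pval pi i.+1 = pi i.
Proof. by rewrite /pval /= valK. Qed.

Lemma pattern_is_rotate m (p : 'S_m.+1) k I (omega : 'S_k) :
  size I = k -> all (fun i => 0 < i <= m) I ->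
  pattern_is (rotate p) (map succn I) omega = pattern_is p I omega.
Proof.
move=> size_I I_range; apply: eq_forallb => j; apply: eq_forallb => j'.
have shift (t : 'I_k) : exists2 x : 'I_m,
    pval p (nth 0 I t) = p (widen_ord (leqnSn m) x)
  & pval (rotate p) (nth 0 (map succn I) t) = rotate p (lift ord0 x).
  have t_lt : t < size I by rewrite size_I.
  rewrite (nth_map 0) //.
  move: (nth 0 I t) (allP I_range _ (mem_nth 0 t_lt)) => i /andP[i_gt0 i_le].
  have [x ->] : exists x : 'I_m, i = x.+1.
    have i_pred_lt : i.-1 < m by rewrite -ltnS prednK.
    by exists (Ordinal i_pred_lt); rewrite prednK.
  by exists x; [exact: (pvalE p (widen_ord _ x)) | exact: (pvalE (rotate p) (lift ord0 x))].
have [x px rx] := shift j; have [x' px' rx'] := shift j'.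
by rewrite px px' rx rx' ltn_rotate_lift.
Qed.

Lemma prob_pattern_succ (R : realFieldType) (q : R) n k I (omega : 'S_k) :
  size I = k -> all (fun i => 0 < i < n) I ->
  prob_pattern n q I omega = prob_pattern n q (map succn I) omega.
Proof.
case: n => [|m] size_I I_range.
  by case: I I_range {size_I} => //= i I /andP[/andP[_]]; rewrite ltn0.
rewrite /prob_pattern [RHS](reindex_inj (@rotate_inj m)); apply: eq_big => p.
  by rewrite pattern_is_rotate.
by move=> _; rewrite /mallows inv_rotate.
Qed.

Lemma prob_pattern_shift (R : realFieldType) (q : R) n k I (omega : 'S_k) b :
  size I = k -> all (fun i => 0 < i <= n - b) I ->
  prob_pattern n q I omega = prob_pattern n q (map (addn b) I) omega.
Proof.
move=> size_I; elim: b => [|b IH] I_range; first by rewrite (eq_map add0n) map_id.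
rewrite IH; last by apply/allP => i /(allP I_range); lia.
rewrite prob_pattern_succ ?size_map //; last first.
  by rewrite all_map; apply/allP => i /(allP I_range) /=; lia.
by rewrite -map_comp; congr (prob_pattern _ _ _ omega); apply: eq_map => i /=; rewrite addSn.
Qed.

Local Open Scope ring_scope.

Theorem lemma2p6 (R : realFieldType) (q : R) (hq : 0 < q) (n k : nat)
  (I : seq nat) (hsize : size I = k) (hsorted : sorted ltn I)
  (hrange : all (fun i => (0 < i <= n)%N) I)
  (b : nat) (hb1 : (1 <= b)%N) (hb2 : (b <= n - last 0%N I)%N)
  (omega : 'S_k) :
  @prob_pattern R n k q I omega = @prob_pattern R n k q (map (addn b) I) omega.
Proof.
(* With [hb1], the
   truncated subtraction in [hb2] still forces [last 0 I < n]. *)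
apply: prob_pattern_shift => //; apply/allP => i I_i.
have /andP[i_gt0 _] := allP hrange i I_i.
have := sorted_leq_last hsorted I_i; lia.
Qed.
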